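(* Let $\lambda,\mu$ be partitions, $n$ a positive integer, and let $M$ be a multiline queue of shape $\mu$ on $n$ columns whose $j$-th column contains exactly $\lambda'_j$ balls for each $j$. Then $\rho_N(M)=M(\lambda')$ if and only if the row word $\mathrm{rw}(M)$ is a lattice word.
   Context: For a partition $\nu$ with conjugate $\nu'$, a multiline queue of shape $\nu$ on $n$ columns is a tuple $(B_1,\dots,B_{\nu_1})$ of subsets of $[n]$ with $|B_j|=\nu'_j$, drawn with rows bottom to top, columns $1..n$ left to right, ball in $(r,j)$ iff $j\in B_r$; tuples with empty top rows are identified with the tuple obtained by deleting those rows. $M(\nu)=(M_1,\dots,M_{\nu_1})$ with $M_j=\{1,\dots,\nu'_j\}$ is the left-justified multiline queue of shape $\nu$. The row word $\mathrm{rw}(M)$ scans rows bottom to top, each row left to right, recording column numbers of balls; the column word $\mathrm{cw}(M)$ scans columns left to right, each top to bottom, recording row numbers. A word is a lattice word if every initial segment contains at least as many letters $i$ as letters $i+1$ for every $i\ge1$. Collapsing: $\mathrm{Par}_i(w)$ writes ''('' for each letter $i+1$ and '')'' for each letter $i$ of $w$, left to right, and iteratively matches a ''('' with a '')'' to its right when adjacent or separated only by matched parentheses. $e_i^\star(B)$ moves every ball of row $i+1$ whose letter in $\mathrm{cw}(B)$ is unmatched in $\mathrm{Par}_i(\mathrm{cw}(B))$ down to row $i$ in the same column. With $L$ the number of rows, $e^\star_{[a,b]}=e^\star_ae^\star_{a+1}\cdots e^\star_b$ (acting right to left) and $\rho_N(B)=e^\star_{[1,L-1]}\cdots e^\star_{[1,1]}(B)$.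 *)

From mathcomp Require Import all_boot.
Set Implicit Arguments. Unset Strict Implicit. Unset Printing Implicit Defensive.

(* Conventions: columns 1..n are encoded by 'I_n (column c+1 is the ordinal c);
   a multiline queue (B_1,...,B_L) is a list [:: B_1; ...; B_L] of subsets of
   'I_n (bottom row first).  Row r (1-indexed) is stored at list index r-1.
   Letters of row/column words are 1-indexed naturals as in the paper. *)

Definition is_part (l : seq nat) : bool := sorted geq l && all (fun x => 0 < x) l.

(* Conjugate partition: (conj l)`_j = l'_{j+1} = #{ i | l_i >= j+1 }. *)
Definition conj (l : seq nat) : seq nat :=
  [seq count (fun x => j < x) l | j <- iota 0 (head 0 l)].

Section MLQ.
Variable n : nat.
Notation mlq := (seq {set 'I_n}).

Definition has_shape (nu : seq nat) (B : mlq) : Prop :=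
  map (fun s : {set 'I_n} => #|s|) B = conj nu.

Definition col_count (B : mlq) (j : 'I_n) : nat := count (fun s : {set 'I_n} => j \in s) B.

Definition Mlq (nu : seq nat) : mlq := [seq [set i : 'I_n | i < c] | c <- conj nu].

(* identification of tuples differing by empty top rows *)
Fixpoint strip (B : mlq) : mlq :=
  match B with
  | [::] => [::]
  | s :: B' => let t := strip B' in
               if (t == [::]) && (s == set0) then [::] else s :: t
  end.

Definition rw (B : mlq) : seq nat :=
  flatten [seq [seq (val j).+1 | j <- enum 'I_n & j \in s] | s : {set 'I_n} <- B].

(* column word, with each letter (a row number) tagged by its column:
   columns left to right, each top to bottom *)
Definition cwp (B : mlq) : seq ('I_n * nat) :=
  flatten [seq [seq (j, r.+1) | r <- rev (iota 0 (size B)) & j \in nth set0 B r]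
          | j <- enum 'I_n].

Definition cw (B : mlq) : seq nat := [seq p.2 | p <- cwp B].

(* Par_i: the letters i+1 ("(" , tagged true) and i (")" , tagged false) of
   cw(B), in order, each tagged with the column of its ball (within the
   subword of letters i, i+1 each pair (column, bracket) occurs at most once). *)
Definition brk (i : nat) (B : mlq) : seq ('I_n * bool) :=
  [seq (p.1, p.2 == i.+1) | p <- cwp B & (p.2 == i) || (p.2 == i.+1)].

End MLQ.

Fixpoint reduce1 (T : Type) (s : seq (T * bool)) : seq (T * bool) :=
  match s with
  | [::] => [::]
  | x :: s' =>
      match s' with
      | [::] => s
      | y :: t => if x.2 && ~~ y.2 then t else x :: reduce1 s'
      end
  end.

Section Ops.
Variable n : nat.
Notation mlq := (seq {set 'I_n}).

(* unmatched parentheses after iterated matching (size steps suffice) *)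
Definition unmatched (i : nat) (B : mlq) : seq ('I_n * bool) :=
  iter (size (cwp B)) (@reduce1 'I_n) (brk i B).

Definition estar (i : nat) (B : mlq) : mlq :=
  let S := [set j : 'I_n | (j, true) \in unmatched i B] in
  [seq if r.+1 == i then nth set0 B r :|: S
       else if r.+1 == i.+1 then nth set0 B r :\: S
       else nth set0 B r | r <- iota 0 (size B)].

(* e^star_[a,b] = e_a e_{a+1} ... e_b (e_b applied first) *)
Definition estar_int (a b : nat) (B : mlq) : mlq :=
  foldr (fun i acc => estar i acc) B (iota a (b.+1 - a)).

Definition rhoN (B : mlq) : mlq :=
  foldl (fun acc k => estar_int 1 k acc) B (iota 1 (size B).-1).

End Ops.

Definition lattice (w : seq nat) : Prop :=
  forall (k i : nat), count_mem i.+2 (take k w) <= count_mem i.+1 (take k w).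

(* Write c_j(r) for the number of balls of column j in the lowest r rows.  Each row
   contributes its column numbers in increasing order to rw(M), so rw(M) is a lattice
   word iff c_{j+1}(r) <= c_j(r) for all j and r ("column-lattice").
   The operator e*_i only moves balls down inside their columns, and it preserves and
   reflects column-lattice queues.  This rests on three local facts about Par_i, read
   column by column: a ball of row i+1 is lowered only if there is no ball below it in
   row i; if there is none, it is not lowered when the next column has a ball in row i
   and none in row i+1, and it is lowered when the next column has a lowered ball, or
   when no column from it on has a ball in row i.  If rows 1..i are moreover nested,
   the last fact shows that e*_i lowers exactly the balls of row i+1 missing from row i,
   i.e. replaces rows i, i+1 by their union and intersection.  Hence e*_[1,k] inserts
   row k+1 into the chain below it, and rho_N of a column-lattice queue is nested.  A
   nested queue is determined by its column counts lambda'_j, so it is M(lambda');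
   conversely M(lambda') is column-lattice, and so is M whenever rho_N(M) = M(lambda'). *)

From mathcomp Require Import all_boot zify.
Set Implicit Arguments. Unset Strict Implicit. Unset Printing Implicit Defensive.

Section BracketMatching.
Variable T : eqType.
Implicit Types (s t : seq (T * bool)) (x y z c d : T * bool).

Definition after x s := drop (index x s).+1 s.
Definition succ_in x s := ohead (after x s).

Lemma after_cons x c s : after x (c :: s) = if c == x then s else after x s.
Proof. by rewrite /after /=; case: eqP; rewrite ?drop0. Qed.

Lemma succ_in_cons x c s : succ_in x (c :: s) = if c == x then ohead s else succ_in x s.
Proof. by rewrite /succ_in after_cons; case: ifP. Qed.

Lemma after_cat x a t : x \notin a -> after x (a ++ x :: t) = t.
Proof.
elim: a => [|c a IH]; first by rewrite /= after_cons eqxx.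
by rewrite inE negb_or => /andP [xNc /IH]; rewrite cat_cons after_cons eq_sym (negbTE xNc).
Qed.

Lemma succ_in_memx x y s : succ_in x s = Some y -> x \in s.
Proof.
by case: (boolP (x \in s)) => // /memNindex xs; rewrite /succ_in /after xs drop_oversize.
Qed.

Lemma succ_in_mem x y s : succ_in x s = Some y -> y \in s.
Proof.
rewrite /succ_in; case E: (after x s) => [|d t] //= [<-].
by apply: (mem_drop (n0 := (index x s).+1)); rewrite -/(after x s) E mem_head.
Qed.

Lemma reduce1_cons2 c d s :
  reduce1 (c :: d :: s) = if c.2 && ~~ d.2 then s else c :: reduce1 (d :: s).
Proof. by []. Qed.

Lemma subseq_reduce1 s : subseq (reduce1 s) s.
Proof.
elim: s => [|c [|d s] IH] //; rewrite reduce1_cons2.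
case: ifP => _; last by rewrite /= eqxx.
exact: subseq_trans (subseq_cons _ _) (subseq_cons _ _).
Qed.

Lemma mem_reduce1 s : {subset reduce1 s <= s}.
Proof. exact: mem_subseq (subseq_reduce1 s). Qed.

Lemma mem_iter_reduce1 m s : {subset iter m (@reduce1 T) s <= s}.
Proof. by elim: m => //= m IH z /mem_reduce1 /IH. Qed.

Lemma reduce1_uniq s : uniq s -> uniq (reduce1 s).
Proof. exact: subseq_uniq (subseq_reduce1 s). Qed.

Lemma reduce1_id_or_shorter s : reduce1 s = s \/ size (reduce1 s) < size s.
Proof.
elim: s => [|c [|d s] IH]; [by left | by left |]; rewrite reduce1_cons2.
case: ifP => _; first by right; rewrite /= ltnS leqW.
by case: IH => [->|shorter]; [left | right; rewrite /= ltnS].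
Qed.

Lemma reduce1_iter_fixpoint m s :
  size s <= m -> reduce1 (iter m (@reduce1 T) s) = iter m (@reduce1 T) s.
Proof.
elim: m s => [|m IH] s; first by case: s.
rewrite iterSr; case: (reduce1_id_or_shorter s) => [fix_s _|shorter size_s].
  have iter_s k : iter k (@reduce1 T) s = s by elim: k => //= k ->.
  by rewrite fix_s iter_s.
by apply: IH; rewrite -ltnS (leq_trans shorter).
Qed.

Lemma reduce1_shorter x y s :
  x.2 -> ~~ y.2 -> succ_in x s = Some y -> size (reduce1 s) < size s.
Proof.
move=> xo yc; elim: s => [|c [|d s] IH] //.
rewrite reduce1_cons2; case: ifP => cd; first by rewrite /= ltnS leqW.
rewrite succ_in_cons; case: eqP => [cx [dy]|_ /IH]; last by rewrite /= ltnS.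
by move: cd; rewrite cx xo dy yc.
Qed.

Lemma iter_reduce1_ind (P : seq (T * bool) -> Prop) m s :
  (forall s, uniq s -> P s -> P (reduce1 s)) -> uniq s -> P s -> P (iter m (@reduce1 T) s).
Proof.
move=> step; elim: m s => [|m IH] s us Ps //.
rewrite iterSr; apply: IH; [exact: reduce1_uniq | exact: step].
Qed.

Lemma reduce1_keeps_close_succ x y s : uniq s -> x.2 -> ~~ y.2 ->
  (x \in s -> succ_in x s = Some y) -> x \in reduce1 s -> succ_in x (reduce1 s) = Some y.
Proof.
move=> + xo yc; elim: s => [|c [|d s] IH] //; rewrite reduce1_cons2 => /andP [cNds uds].
case: ifP => cd succ_xy.
  move=> xs; have := succ_xy; rewrite !inE xs !orbT => /(_ isT).
  rewrite !succ_in_cons; case: eqP => [cx|_]; first by move: cNds; rewrite cx !inE xs orbT.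
  by case: eqP => [dx|//]; move: uds; rewrite /= dx xs.
rewrite inE eq_sym succ_in_cons; case: eqP => [cx _|cNx xr].
  have := succ_xy; rewrite -cx mem_head succ_in_cons eqxx => /(_ isT) [dy].
  rewrite -dy in yc *.
  by case: s {IH cNds uds cd succ_xy} => [|e s] //=; rewrite (negbTE yc).
apply: IH => // xds; have := succ_xy; rewrite inE xds orbT succ_in_cons => /(_ isT).
by case: eqP.
Qed.

Lemma reduce1_keeps_open_succ x z s : uniq s -> x.2 -> z.2 -> x != z ->
  (z \in s -> succ_in x s = Some z) -> z \in reduce1 s -> succ_in x (reduce1 s) = Some z.
Proof.
move=> + xo zo xNz; elim: s => [|c [|d s] IH] //; rewrite reduce1_cons2 => /andP [cNds uds].
case: ifP => cd succ_xz.
  move=> zs; have := succ_xz; rewrite !inE zs !orbT => /(_ isT).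
  rewrite !succ_in_cons; case: eqP => [_ [dz]|_]; first by move: cd; rewrite dz zo andbF.
  by case: eqP => [dx|//]; move: cd; rewrite dx xo andbF.
rewrite inE; case: eqP => [zc _|zNc zr].
  have := succ_xz; rewrite zc mem_head succ_in_cons => /(_ isT).
  case: eqP => [cx|_ /succ_in_mem cds]; first by move: xNz; rewrite zc cx eqxx.
  by move: cNds; rewrite cds.
have zds := mem_reduce1 zr; rewrite succ_in_cons.
case: eqP => [cx|cNx].
  have := succ_xz; rewrite inE zds orbT succ_in_cons cx eqxx => /(_ isT) [dz].
  move: zr uds; rewrite -dz in zo *; case: s {IH zds cNds cd succ_xz} => [|e s] //.
  rewrite reduce1_cons2 zo /=; case: ifP => // _ ds /andP [dNes _].
  by rewrite inE ds orbT in dNes.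
apply: IH => // zds'; have := succ_xz; rewrite inE zds' orbT succ_in_cons => /(_ isT).
by case: eqP.
Qed.

Lemma reduce1_keeps_open_after x s : x.2 -> x \in s -> all snd (after x s) ->
  x \in reduce1 s /\ all snd (after x (reduce1 s)).
Proof.
move=> xo; elim: s => [|c [|d s] IH] //.
rewrite reduce1_cons2; case: ifP => cd; rewrite !after_cons.
  case: (c =P x) => [cx _ /andP [d_open _]|cNx]; first by move: cd; rewrite d_open /= andbF.
  case: (d =P x) => [dx|dNx]; first by move: cd; rewrite dx xo andbF.
  by rewrite !inE => /or3P [/eqP xc|/eqP xd|xs]; [case: cNx | case: dNx | ].
case: (c =P x) => [cx _ ds_open|cNx].
  by rewrite cx mem_head; split=> //; apply/allP => e /mem_reduce1 /(allP ds_open).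
rewrite inE => /orP [/eqP xc|xds ds_open]; first by case: cNx.
have [xr r_open] : x \in reduce1 (d :: s) /\ all snd (after x (reduce1 (d :: s))).
  by apply: IH; rewrite ?after_cons.
by rewrite inE xr orbT.
Qed.

Lemma iter_reduce1_close_matched x y s m : uniq s -> x.2 -> ~~ y.2 ->
  succ_in x s = Some y -> size s <= m -> x \notin iter m (@reduce1 T) s.
Proof.
move=> us xo yc xy size_s.
have inv : x \in iter m (@reduce1 T) s -> succ_in x (iter m (@reduce1 T) s) = Some y.
  apply: (iter_reduce1_ind (P := fun s => x \in s -> succ_in x s = Some y)) => // s' us'.
  exact: reduce1_keeps_close_succ.
apply/negP => /inv /(reduce1_shorter xo yc).
by rewrite reduce1_iter_fixpoint // ltnn.
Qed.

Lemma iter_reduce1_open_succ x z s m : uniq s -> x.2 -> z.2 -> x != z ->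
  succ_in x s = Some z -> z \in iter m (@reduce1 T) s -> x \in iter m (@reduce1 T) s.
Proof.
move=> us xo zo xNz xz.
have inv : z \in iter m (@reduce1 T) s -> succ_in x (iter m (@reduce1 T) s) = Some z.
  apply: (iter_reduce1_ind (P := fun s => z \in s -> succ_in x s = Some z)) => // s' us'.
  exact: reduce1_keeps_open_succ.
by move/inv/succ_in_memx.
Qed.

Lemma iter_reduce1_open_after x s m : uniq s -> x.2 -> x \in s -> all snd (after x s) ->
  x \in iter m (@reduce1 T) s.
Proof.
move=> us xo xs s_open.
suff [] : x \in iter m (@reduce1 T) s /\ all snd (after x (iter m (@reduce1 T) s)) by [].
apply: (iter_reduce1_ind (P := fun s => x \in s /\ all snd (after x s))) => // s' _ [].
exact: reduce1_keeps_open_after.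
Qed.

End BracketMatching.

Lemma filter_rev_iota_adjacent i L : 0 < i < L ->
  [seq r <- rev (iota 0 L) | (r.+1 == i) || (r.+1 == i.+1)] = [:: i; i.-1].
Proof.
case: i => // i /andP [_ iL].
have -> : L = i + (2 + (L - i.+2)) by lia.
rewrite !iotaD filter_rev !filter_cat.
rewrite (@eq_in_filter _ _ pred0 (iota 0 i)) ?filter_pred0; last first.
  by move=> r; rewrite mem_iota /=; lia.
rewrite (@eq_in_filter _ _ pred0 (iota (0 + i + 2) _)) ?filter_pred0; last first.
  by move=> r; rewrite mem_iota /=; lia.
by rewrite add0n /= !eqxx orbT.
Qed.

Lemma enum_ord_cat n (j : 'I_n) : enum 'I_n = take j (enum 'I_n) ++ j :: drop j.+1 (enum 'I_n).
Proof.
by rewrite -{1}(cat_take_drop j (enum 'I_n)) (drop_nth j) ?size_enum_ord // nth_ord_enum.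
Qed.

Lemma mem_take_enum_ord n (j k : 'I_n) : k \in take j (enum 'I_n) -> k < j.
Proof.
by move/(map_f val); rewrite map_take val_enum_ord take_iota mem_iota ltn_min => /and3P [].
Qed.

Lemma mem_drop_enum_ord n (j k : 'I_n) : k \in drop j.+1 (enum 'I_n) -> j < k.
Proof. by move/(map_f val); rewrite map_drop val_enum_ord drop_iota mem_iota => /andP []. Qed.

Lemma drop_enum_ord_succ n (j j' : 'I_n) : j' = j.+1 :> nat ->
  drop j.+1 (enum 'I_n) = j' :: drop j'.+1 (enum 'I_n).
Proof. by move=> jj'; rewrite (drop_nth j') -jj' ?size_enum_ord // nth_ord_enum. Qed.

Lemma nth_le_head mu j : sorted geq mu -> nth 0 mu j <= head 0 mu.
Proof.
case: mu => [|x mu] mu_sorted; first by rewrite nth_nil.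
case: j => [|j] //=; case: (ltnP j (size mu)) => [j_lt|]; last by move=> ?; rewrite nth_default.
by move/allP: (order_path_min (rev_trans leq_trans) mu_sorted); apply; rewrite mem_nth.
Qed.

Lemma conj_sorted l : sorted geq (conj l).
Proof.
rewrite /conj sorted_map; apply: sub_sorted (iota_sorted 0 _) => a b ab /=.
by apply: sub_count => x /=; apply: leq_ltn_trans ab.
Qed.

Lemma nth_conj mu r : nth 0 (conj mu) r = if r < head 0 mu then count (fun x => r < x) mu else 0.
Proof.
rewrite /conj; case: ifP => r_lt; first by rewrite (nth_map 0) ?size_iota // nth_iota.
by rewrite nth_default // size_map size_iota leqNgt r_lt.
Qed.

Lemma ltn_count_gt mu j r : sorted geq mu ->
  (j < count (fun x => r < x) mu) = (r < nth 0 mu j).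
Proof.
elim: mu j => [|x mu IH] j mu_sorted /=; first by rewrite nth_nil ltn0.
have x_max := order_path_min (rev_trans leq_trans) mu_sorted.
case: (ltnP r x) => [rx|xr].
  by case: j => [|j] //=; rewrite add1n ltnS IH ?(path_sorted mu_sorted).
rewrite (@eq_in_count _ _ pred0) ?count_pred0 ?ltn0; last first.
  by move=> y /(allP x_max) yx /=; apply/negbTE; rewrite -leqNgt (leq_trans yx).
apply/esym/negbTE; rewrite -leqNgt; case: j => [|j] //=.
case: (ltnP j (size mu)) => [j_lt|]; last by move=> ?; rewrite nth_default.
by apply: leq_trans xr; apply: (allP x_max); rewrite mem_nth.
Qed.

Lemma take_flatten_split (T : Type) (ss : seq (seq T)) k :
  exists r c, take k (flatten ss) = flatten (take r ss) ++ take c (nth [::] ss r).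
Proof.
elim: ss k => [|s ss IH] k; first by exists 0, 0.
rewrite /= take_cat; case: ifP => _; first by exists 0, k.
by have [r [c ->]] := IH (k - size s); exists r.+1, c; rewrite /= catA.
Qed.

Lemma sorted_take_lower (s : seq nat) c x y : sorted ltn s -> x \in s -> x < y ->
  y \in take c s -> x \in take c s.
Proof.
move=> s_sorted xs xy yc; move: xs; rewrite -{1}(cat_take_drop c s) mem_cat => /orP [//|xd].
move: s_sorted; rewrite (sorted_pairwise ltn_trans) -{1}(cat_take_drop c s) pairwise_cat.
by case/and3P => /allrelP /(_ y x yc xd); rewrite ltnNge ltnW.
Qed.

Section ColumnBrackets.
Variable n : nat.
Implicit Types (B : seq {set 'I_n}) (j k : 'I_n).

Definition row B r := nth set0 B r.

(* Rows are 0-indexed: row [i] carries the letters i+1 of cw(B), the "(" of Par_i, and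
   row [i.-1] the letters i, its ")". *)
Definition col_brackets i B j : seq ('I_n * bool) :=
  (if j \in row B i then [:: (j, true)] else [::]) ++
  (if j \in row B i.-1 then [:: (j, false)] else [::]).

Lemma brk_col_brackets i B : 0 < i < size B ->
  brk i B = flatten [seq col_brackets i B j | j <- enum 'I_n].
Proof.
move=> i_range; rewrite /brk /cwp filter_flatten map_flatten -!map_comp.
congr flatten; apply: eq_map => j /=.
rewrite filter_map -map_comp -filter_predI.
rewrite (@eq_filter _ _ (predI (fun r => j \in row B r) (fun r => (r.+1 == i) || (r.+1 == i.+1))));
  last by move=> r; rewrite /= andbC.
rewrite filter_predI filter_rev_iota_adjacent //.
case/andP: i_range => i_gt0 _; rewrite /col_brackets /=.
by case: (j \in row B i); case: (j \in row B i.-1); rewrite /= ?eqxx ?prednK // ?ltn_eqF.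
Qed.

Lemma mem_col_brackets i B j x : x \in col_brackets i B j -> x.1 = j.
Proof. by rewrite /col_brackets mem_cat => /orP []; case: ifP; rewrite ?inE // => _ /eqP ->. Qed.

Lemma uniq_flatten_col_brackets i B (ks : seq 'I_n) :
  uniq ks -> uniq (flatten [seq col_brackets i B k | k <- ks]).
Proof.
elim: ks => [|k ks IH] //= /andP [kNks uks]; rewrite cat_uniq IH // andbT.
apply/andP; split.
  by rewrite /col_brackets; case: ifP; case: ifP => //= _ _; rewrite inE xpair_eqE andbF.
apply/hasPn => x /flattenP [_ /mapP [k' k'ks ->] /mem_col_brackets xk'].
by apply/negP => /mem_col_brackets xk; move: kNks; rewrite -xk xk' k'ks.
Qed.

Lemma brk_uniq i B : 0 < i < size B -> uniq (brk i B).
Proof. by move=> i_range; rewrite brk_col_brackets // uniq_flatten_col_brackets ?enum_uniq. Qed.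

Lemma size_brk i B : size (brk i B) <= size (cwp B).
Proof. by rewrite size_map size_filter count_size. Qed.

Lemma mem_brk_open i B j : 0 < i < size B -> (j, true) \in brk i B -> j \in row B i.
Proof.
move=> i_range; rewrite brk_col_brackets // => /flattenP [_ /mapP [k _ ->] jk].
move: jk (mem_col_brackets jk) => + /= kj; rewrite -kj /col_brackets mem_cat.
by case: ifP => // _; case: ifP; rewrite ?inE ?xpair_eqE ?andbF.
Qed.

Lemma after_brk i B j : 0 < i < size B -> j \in row B i ->
  after (j, true) (brk i B) =
  (if j \in row B i.-1 then [:: (j, false)] else [::]) ++
  flatten [seq col_brackets i B k | k <- drop j.+1 (enum 'I_n)].
Proof.
move=> i_range ji; rewrite brk_col_brackets // {1}(enum_ord_cat j) map_cat flatten_cat /=.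
rewrite {2}/col_brackets ji -catA /= after_cat //.
apply/flattenP => -[_ /mapP [k /mem_take_enum_ord kj ->] /mem_col_brackets /= jk].
by rewrite jk ltnn in kj.
Qed.

Definition lowered i B := [set j | (j, true) \in unmatched i B].

Lemma lowered_close_succ i B j y : 0 < i < size B -> ~~ y.2 ->
  succ_in (j, true) (brk i B) = Some y -> j \notin lowered i B.
Proof.
move=> i_range yc succ_jy; rewrite inE.
exact: iter_reduce1_close_matched (brk_uniq i_range) _ yc succ_jy (size_brk i B).
Qed.

Lemma lowered_sub i B j : 0 < i < size B -> j \in lowered i B ->
  j \in row B i /\ j \notin row B i.-1.
Proof.
move=> i_range jl; have ji : j \in row B i.
  by rewrite inE in jl; exact: mem_brk_open i_range (mem_iter_reduce1 jl).
split=> //; apply/negP => ji1; move: jl; apply/negP.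
by apply: (lowered_close_succ i_range (y := (j, false))); rewrite // /succ_in after_brk // ji1.
Qed.

Lemma lowered_succ_close i B j j' : 0 < i < size B -> j' = j.+1 :> nat ->
  j \in row B i -> j' \notin row B i -> j' \in row B i.-1 -> j \notin lowered i B.
Proof.
move=> i_range jj' ji j'Ni j'i1; case: (boolP (j \in row B i.-1)) => ji1.
  by apply: (lowered_close_succ i_range (y := (j, false))); rewrite // /succ_in after_brk // ji1.
apply: (lowered_close_succ i_range (y := (j', false))) => //.
rewrite /succ_in after_brk // (negbTE ji1) (drop_enum_ord_succ jj') /=.
by rewrite /col_brackets (negbTE j'Ni) j'i1.
Qed.

Lemma lowered_succ_open i B j j' : 0 < i < size B -> j' = j.+1 :> nat ->
  j \in row B i -> j \notin row B i.-1 -> j' \in row B i ->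
  j' \in lowered i B -> j \in lowered i B.
Proof.
move=> i_range jj' ji jNi1 j'i; rewrite !inE.
apply: (iter_reduce1_open_succ (brk_uniq i_range)) => //.
  by rewrite xpair_eqE andbT; apply/eqP => jj; move: jj'; rewrite jj; lia.
by rewrite /succ_in after_brk // (negbTE jNi1) (drop_enum_ord_succ jj') /= /col_brackets j'i.
Qed.

Lemma lowered_last_open i B j : 0 < i < size B -> j \in row B i ->
  (forall k : 'I_n, j <= k -> k \notin row B i.-1) -> j \in lowered i B.
Proof.
move=> i_range ji no_close; rewrite inE /unmatched.
apply: iter_reduce1_open_after => //; first exact: brk_uniq.
  rewrite brk_col_brackets //; apply/flattenP; exists (col_brackets i B j).
    by apply: map_f; rewrite mem_enum.
  by rewrite /col_brackets ji mem_head.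
rewrite after_brk // (negbTE (no_close j (leqnn j))) /=.
apply/allP => x /flattenP [_ /mapP [k /mem_drop_enum_ord jk ->]].
rewrite /col_brackets (negbTE (no_close k (ltnW jk))) cats0.
by case: ifP; rewrite ?inE // => _ /eqP ->.
Qed.

End ColumnBrackets.

Section ColumnCounts.
Variable n : nat.
Implicit Types (B : seq {set 'I_n}) (j : 'I_n).

Definition col_count_below B j r := count (fun t => j \in row B t) (iota 0 r).

Definition col_lattice B :=
  forall j j' r, j' = j.+1 :> nat -> col_count_below B j' r <= col_count_below B j r.

Lemma col_count_belowS B j r :
  col_count_below B j r.+1 = col_count_below B j r + (j \in row B r).
Proof. by rewrite /col_count_below -addn1 iotaD count_cat /= addn0. Qed.

Lemma col_count_below_le B j r : col_count_below B j r <= r.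
Proof. by rewrite (leq_trans (count_size _ _)) ?size_iota. Qed.

Lemma col_count_col_count_below B j : col_count B j = col_count_below B j (size B).
Proof. by rewrite /col_count /col_count_below -{1}(mkseq_nth set0 B) /mkseq count_map. Qed.

Lemma size_estar i B : size (estar i B) = size B.
Proof. by rewrite size_map size_iota. Qed.

Lemma row_estar i B r : i < size B ->
  row (estar i B) r = if r.+1 == i then row B r :|: lowered i B
                      else if r == i then row B r :\: lowered i B else row B r.
Proof.
move=> iB; rewrite /row /estar -/(lowered i B).
case: (ltnP r (size B)) => rB; first by rewrite (nth_map 0) ?size_iota // nth_iota.
by rewrite !nth_default ?size_map ?size_iota // !ifN_eq //; lia.
Qed.

Lemma row_estar_other i B r : 0 < i < size B -> r != i.-1 -> r != i ->
  row (estar i B) r = row B r.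
Proof. by case/andP=> i_gt0 iB rNi1 rNi; rewrite row_estar // !ifN_eq //; lia. Qed.

Lemma col_count_below_estar i B j r : 0 < i < size B ->
  col_count_below (estar i B) j r = col_count_below B j r + ((r == i) && (j \in lowered i B)).
Proof.
move=> i_range; have [i_gt0 iB] := andP i_range.
elim: r => [|r IH]; first by rewrite /col_count_below /= ltn_eqF.
rewrite !col_count_belowS row_estar // IH.
case: (boolP (j \in lowered i B)) => [jl|jNl]; last first.
  rewrite !andbF !addn0; case: ifP => _; last case: ifP => _ //.
    by rewrite in_setU (negbTE jNl) orbF.
  by rewrite in_setD jNl.
have [ji jNi1] := lowered_sub i_range jl; rewrite !andbT.
case: (r.+1 =P i) => [ri|_].
  by rewrite -ri /= in jNi1; rewrite in_setU jl orbT (negbTE jNi1) -ri ltn_eqF.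
by case: (r =P i) => [ri|_]; rewrite ?ri ?in_setD ?jl ?ji /= ?addn0.
Qed.

Lemma col_count_estar i B j : 0 < i < size B -> col_count (estar i B) j = col_count B j.
Proof.
move=> i_range; rewrite !col_count_col_count_below size_estar col_count_below_estar //.
by rewrite gtn_eqF ?addn0 //; case/andP: i_range.
Qed.

Lemma col_count_below_estar_other i B j r : 0 < i < size B -> r != i ->
  col_count_below (estar i B) j r = col_count_below B j r.
Proof. by move=> i_range /negbTE rNi; rewrite col_count_below_estar // rNi addn0. Qed.

Lemma col_count_below_pred B j r : 0 < r ->
  col_count_below B j r = col_count_below B j r.-1 + (j \in row B r.-1).
Proof. by move=> r_gt0; rewrite -col_count_belowS prednK. Qed.

Lemma col_lattice_estar_push i B : 0 < i < size B -> col_lattice B -> col_lattice (estar i B).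
Proof.
move=> i_range lat j j' r jj'; have [i_gt0 _] := andP i_range.
case: (r =P i) => [->|/eqP rNi]; last by rewrite !col_count_below_estar_other //; apply: lat.
rewrite !col_count_below_estar // eqxx /=; have lat_i := lat j j' i jj'.
case: (boolP (j \in lowered i B)) => jl; case: (boolP (j' \in lowered i B)) => j'l /=;
  rewrite ?addn0 ?addn1 //; try lia.
rewrite ltn_neqAle lat_i andbT; apply/eqP => same.
have [j'i j'Ni1] := lowered_sub i_range j'l.
have := lat j j' i.-1 jj'; have := lat j j' i.+1 jj'; rewrite !col_count_belowS j'i.
move: same; rewrite !(col_count_below_pred B _ i_gt0) (negbTE j'Ni1).
case: (boolP (j \in row B i.-1)) => ji1; case: (boolP (j \in row B i)) => ji /=; try lia.
by move: jl; rewrite (lowered_succ_open i_range jj' ji ji1 j'i j'l).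
Qed.

Lemma col_lattice_estar_pull i B : 0 < i < size B -> col_lattice (estar i B) -> col_lattice B.
Proof.
move=> i_range lat j j' r jj'; have [i_gt0 _] := andP i_range.
case: (r =P i) => [->|/eqP rNi]; last first.
  by have := lat j j' r jj'; rewrite !col_count_below_estar_other.
have := lat j j' i jj'; rewrite !col_count_below_estar // eqxx /=.
case: (boolP (j \in lowered i B)) => jl; case: (boolP (j' \in lowered i B)) => j'l /=;
  rewrite ?addn0 ?addn1 => // lat_i; try lia.
rewrite leqNgt; apply/negP => gt.
have [ji jNi1] := lowered_sub i_range jl.
have := lat j j' i.-1 jj'; have := lat j j' i.+1 jj'.
have i1Ni : i.-1 != i by lia.
have iSNi : i.+1 != i by lia.
rewrite !col_count_below_estar_other // !col_count_belowS ji.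
move: gt; rewrite !(col_count_below_pred B _ i_gt0) (negbTE jNi1).
case: (boolP (j' \in row B i.-1)) => j'i1; case: (boolP (j' \in row B i)) => j'i /=; try lia.
by move: jl; rewrite (negbTE (lowered_succ_close i_range jj' ji j'i j'i1)).
Qed.

Lemma col_lattice_estar i B : 0 < i < size B -> col_lattice (estar i B) <-> col_lattice B.
Proof.
by move=> i_range; split; [apply: col_lattice_estar_pull | apply: col_lattice_estar_push].
Qed.

End ColumnCounts.

Section RowWord.
Variable n : nat.
Implicit Types (B : seq {set 'I_n}) (s : {set 'I_n}) (j : 'I_n).

Definition row_word s := [seq j.+1 | j : 'I_n <- enum 'I_n & j \in s].

Lemma succ_ord_inj : injective (fun j : 'I_n => j.+1).
Proof. by move=> a b [/val_inj]. Qed.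

Lemma row_word_uniq s : uniq (row_word s).
Proof. by rewrite (map_inj_uniq succ_ord_inj) filter_uniq ?enum_uniq. Qed.

Lemma mem_row_word s j : (j.+1 \in row_word s) = (j \in s).
Proof. by rewrite (mem_map succ_ord_inj) mem_filter mem_enum andbT. Qed.

Lemma row_word_sorted s : sorted ltn (row_word s).
Proof.
rewrite sorted_map; apply: sorted_filter; first by move=> a b c /=; apply: ltn_trans.
apply: (@sub_sorted _ (relpre val ltn)) => [a b /=|]; first by rewrite ltnS.
by rewrite -sorted_map val_enum_ord iota_ltn_sorted.
Qed.

Lemma row_word_large s a : n <= a -> a.+1 \notin row_word s.
Proof. by move=> na; apply/mapP => -[j _ [aj]]; move: (ltn_ord j); lia. Qed.

Lemma nth_map_row_word B r : nth [::] (map row_word B) r = row_word (row B r).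
Proof.
case: (ltnP r (size B)) => rB; first by rewrite (nth_map set0).
rewrite !nth_default ?size_map // /row nth_default //.
rewrite /row_word (@eq_filter _ _ pred0) ?filter_pred0 //.
by move=> j; rewrite inE.
Qed.

Lemma count_row_words B j r :
  count_mem j.+1 (flatten (map row_word (take r B))) = col_count_below B j r.
Proof.
elim: r => [|r IH]; first by rewrite take0.
rewrite col_count_belowS -IH; case: (ltnP r (size B)) => rB.
  rewrite (take_nth set0 rB) map_rcons flatten_rcons count_cat.
  by rewrite [count_mem _ (row_word _)]count_uniq_mem ?row_word_uniq // mem_row_word.
by rewrite !take_oversize ?(leqW rB) // /row nth_default // inE addn0.
Qed.

Lemma col_lattice_row_prefix B r c j j' : col_lattice B -> j' = j.+1 :> nat ->
  col_count_below B j' r + (j'.+1 \in take c (row_word (row B r))) <=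
  col_count_below B j r + (j.+1 \in take c (row_word (row B r))).
Proof.
move=> lat jj'; set R := row B r.
case: (boolP (j'.+1 \in take c (row_word R))) => [j'c|_]; last first.
  by rewrite addn0 (leq_trans (lat j j' r jj')) ?leq_addr.
have j'R : j' \in R by rewrite -mem_row_word (mem_take j'c).
case: (boolP (j \in R)) => jR.
  rewrite (sorted_take_lower (row_word_sorted R) _ _ j'c) ?mem_row_word //; last by rewrite jj'.
  by rewrite leq_add2r lat.
by have := lat j j' r.+1 jj'; rewrite !col_count_belowS -/R (negbTE jR) j'R /=; lia.
Qed.

Lemma lattice_rwE B : lattice (rw B) <-> col_lattice B.
Proof.
change (lattice (flatten (map row_word B)) <-> col_lattice B).
split=> [lat j j' r jj' | lat k a].
  have := lat (size (flatten (map row_word (take r B)))) j.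
  rewrite -[in flatten (map row_word B)](cat_take_drop r B) map_cat flatten_cat take_size_cat //.
  by rewrite (count_row_words B j r) -jj' (count_row_words B j' r).
have [r [c ->]] := take_flatten_split (map row_word B) k; rewrite -map_take nth_map_row_word.
case: (ltnP a.+1 n) => [a_lt|na]; last first.
  rewrite (count_memPn _) // mem_cat negb_or; apply/andP; split.
    by apply/flattenP => -[_ /mapP [s _ ->]]; apply/negP; apply: row_word_large.
  by apply: contra (row_word_large (row B r) na); apply: mem_take.
have /= := col_lattice_row_prefix r c lat (j := Ordinal (ltnW a_lt)) (j' := Ordinal a_lt) erefl.
have /= <- := count_row_words B (Ordinal (ltnW a_lt)) r.
have /= <- := count_row_words B (Ordinal a_lt) r.
by rewrite !count_cat ![count_mem _ (take _ _)]count_uniq_mem ?take_uniq ?row_word_uniq.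
Qed.

End RowWord.

Section Gravity.
Variable n : nat.
Implicit Types (B X : seq {set 'I_n}) (j k : 'I_n).

Definition nested B a b := forall t, a <= t -> t.+1 < b -> row B t.+1 \subset row B t.

Lemma nested_sub B a b t u : nested B a b -> a <= t <= u -> u < b -> row B u \subset row B t.
Proof.
move=> nest /andP [a_t tu]; rewrite -(subnKC tu).
elim: (u - t) => [|d IH] ub; first by rewrite addn0.
apply: subset_trans _ (IH _); last by lia.
by rewrite addnS; apply: nest; lia.
Qed.

Lemma col_lattice_mono B j k r : col_lattice B -> j <= k ->
  col_count_below B k r <= col_count_below B j r.
Proof.
move=> lat jk; have [d kjd] : exists d, k = j + d :> nat by exists (k - j); lia.
elim: d k kjd {jk} => [|d IH] k kjd; first by rewrite addn0 in kjd; rewrite (val_inj kjd).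
have jd_lt : j + d < n by have := ltn_ord k; lia.
apply: leq_trans (IH (Ordinal jd_lt) erefl); apply: lat; rewrite /= kjd; lia.
Qed.

Lemma col_count_below_full B j r :
  (forall t, t < r -> j \in row B t) -> col_count_below B j r = r.
Proof.
move=> full; rewrite /col_count_below (@eq_in_count _ _ predT) ?count_predT ?size_iota //.
by move=> t; rewrite mem_iota => /andP [_ tr]; apply: full.
Qed.

Lemma lowered_nested i B : 0 < i < size B -> col_lattice B -> nested B 0 i ->
  lowered i B = row B i :\: row B i.-1.
Proof.
move=> i_range lat nest; have [i_gt0 _] := andP i_range.
apply/setP => j; rewrite in_setD.
apply/idP/idP => [/(lowered_sub i_range) [-> ->] // | /andP [jNi1 ji]].
apply: lowered_last_open => // k jk; apply/negP => ki1.
have k_full : col_count_below B k i = i.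
  by apply: col_count_below_full => t ti; apply: (subsetP (nested_sub nest _ _)) ki1; lia.
have j_low : col_count_below B j i <= i.-1.
  by rewrite -{1}(prednK i_gt0) col_count_belowS (negbTE jNi1) addn0 col_count_below_le.
by have := col_lattice_mono i lat jk; lia.
Qed.

Section OneStep.
Variables (i : nat) (B : seq {set 'I_n}).
Hypotheses (i_range : 0 < i < size B) (lat : col_lattice B) (nest : nested B 0 i).

Lemma row_estar_nested_below : row (estar i B) i.-1 = row B i.-1 :|: row B i.
Proof.
have [i_gt0 iB] := andP i_range.
rewrite row_estar // lowered_nested // prednK // eqxx.
by apply/setP => x; rewrite !inE; case: (x \in row B i.-1).
Qed.

Lemma row_estar_nested_at : row (estar i B) i = row B i :&: row B i.-1.
Proof.
have [i_gt0 iB] := andP i_range.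
rewrite row_estar // lowered_nested // ifN_eq ?eqxx; last by lia.
by apply/setP => x; rewrite !inE; case: (x \in row B i); case: (x \in row B i.-1).
Qed.

End OneStep.

(* The state of e*_[1,h] once e*_h, ..., e*_(i+1) have acted: rows 0..i-1 are still the
   original chain, rows i..h already form a chain, and row i+1 fits under row i-1, which
   keeps the chain when e*_i merges rows i-1 and i. *)
Definition bubbling h i X :=
  [/\ col_lattice X, nested X 0 i, nested X i h.+1 &
      0 < i < h -> row X i.+1 \subset row X i.-1].

Lemma bubbling_estar h i X : 0 < i <= h -> h < size X ->
  bubbling h i X -> bubbling h i.-1 (estar i X).
Proof.
move=> /andP [i_gt0 ih] hX [lat nest_lo nest_hi above].
have i_range : 0 < i < size X by rewrite i_gt0; lia.
have rowU := row_estar_nested_below i_range lat nest_lo.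
have rowI := row_estar_nested_at i_range lat nest_lo.
have rowE := row_estar_other i_range.
split.
- exact/(col_lattice_estar i_range).
- by move=> t _ t_lt; rewrite !rowE; try lia; apply: nest_lo; lia.
- move=> t t_ge t_lt; case: (t =P i.-1) => [->|/eqP tNi1].
    by rewrite prednK // rowI rowU; apply: subset_trans (subsetIl _ _) (subsetUr _ _).
  case: (t =P i) => [->|/eqP tNi].
    by rewrite rowI rowE ?subsetI; try lia; rewrite nest_hi ?above //; lia.
  by rewrite !rowE; try lia; apply: nest_hi; lia.
- rewrite prednK // => /andP [i1_gt0 _]; rewrite rowI rowE; try lia.
  apply: subset_trans (subsetIr _ _) _.
  by have := nest_lo i.-2 (leq0n _); rewrite (_ : i.-2.+1 = i.-1); [apply; lia | lia].
Qed.

End Gravity.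

Section Rho.
Variable n : nat.
Implicit Types (B X : seq {set 'I_n}).

Notation estar_step := (fun acc k => estar_int 1 k acc).

Lemma size_foldr_estar X s : size (foldr (@estar n) X s) = size X.
Proof. by elim: s => //= i s IH; rewrite size_estar. Qed.

Lemma size_foldl_estar_int X ks : size (foldl estar_step X ks) = size X.
Proof. by elim: ks X => //= k ks IH X; rewrite IH size_foldr_estar. Qed.

Lemma nested_estar_int k X : 0 < k < size X -> col_lattice X -> nested X 0 k ->
  nested (estar_int 1 k X) 0 k.+1.
Proof.
move=> /andP [k_gt0 kX] lat nest.
suff /(_ k (leqnn k)) : forall c, c <= k ->
    bubbling k (k - c) (foldr (@estar n) X (iota (k - c).+1 c)).
  by rewrite subnn /estar_int subn1 => -[].
elim=> [|c IH] ck; first by rewrite subn0; split=> // [t ? ?|/andP []]; lia.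
rewrite (_ : k - c.+1 = (k - c).-1); last by lia.
rewrite prednK /=; last by lia.
apply: bubbling_estar; [lia | by rewrite size_foldr_estar | apply: IH; lia].
Qed.

Section Invariance.
Variable P : seq {set 'I_n} -> Prop.
Hypothesis P_estar : forall i X, 0 < i < size X -> P (estar i X) <-> P X.

Lemma foldl_estar_int_invariant ks X : all (fun k => k < size X) ks ->
  P (foldl estar_step X ks) <-> P X.
Proof.
elim: ks X => //= k ks IH X /andP [kX ksX].
have size_k : size (estar_int 1 k X) = size X by exact: size_foldr_estar.
rewrite IH ?size_k //; rewrite /estar_int subn1.
have : all (fun i => 0 < i < size X) (iota 1 k) by apply/allP => i; rewrite mem_iota; lia.
elim: (iota 1 k) => //= i s IHs /andP [i_range s_range].
by rewrite P_estar ?size_foldr_estar ?IHs.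
Qed.

Lemma rhoN_invariant B : P (rhoN B) <-> P B.
Proof. by apply: foldl_estar_int_invariant; apply/allP => k; rewrite mem_iota; lia. Qed.

End Invariance.

Lemma col_lattice_rhoN B : col_lattice (rhoN B) <-> col_lattice B.
Proof. exact/rhoN_invariant/col_lattice_estar. Qed.

Lemma col_count_rhoN B j : col_count (rhoN B) j = col_count B j.
Proof.
apply: (rhoN_invariant (P := fun X => col_count X j = col_count B j) _ B).2 => // i X i_range.
by rewrite col_count_estar.
Qed.

Lemma nested_rhoN B : col_lattice B -> nested (rhoN B) 0 (size (rhoN B)).
Proof.
rewrite size_foldl_estar_int => lat.
have nest_k k : k < size B -> nested (foldl estar_step B (iota 1 k)) 0 k.+1.
  elim: k => [|k IH] kB; first by move=> t; lia.
  have ks_range : all (fun x => x < size B) (iota 1 k).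
    by apply/allP => x; rewrite mem_iota; lia.
  rewrite (_ : iota 1 k.+1 = iota 1 k ++ [:: k.+1]) ?foldl_cat; last first.
    by rewrite -[k.+1 in LHS]addn1 iotaD.
  apply: nested_estar_int; [by rewrite size_foldl_estar_int; lia | | exact: IH (ltnW kB)].
  exact: (foldl_estar_int_invariant (P := @col_lattice n) (@col_lattice_estar n) ks_range).2.
case: (posnP (size B)) => [-> t|B_gt0]; first by lia.
by rewrite -(prednK B_gt0); apply: nest_k; lia.
Qed.

End Rho.

Section Strip.
Variable n : nat.
Implicit Types (X Y : seq {set 'I_n}).

Lemma nth_strip X t : nth set0 (strip X) t = nth set0 X t.
Proof.
elim: X t => [|s X IH] t //=.
case: ifP => [/andP [/eqP X0 /eqP ->]|_]; last by case: t.
by case: t => [|t] //=; rewrite -IH X0 nth_nil.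
Qed.

Lemma strip_nil X : (forall r, nth set0 X r = set0) -> strip X = [::].
Proof.
elim: X => [|s X IH] // X0 /=.
by rewrite IH => [|r]; [rewrite (X0 0 : s = set0) !eqxx | exact: X0 r.+1].
Qed.

Lemma eq_strip X Y : (forall r, nth set0 X r = nth set0 Y r) -> strip X = strip Y.
Proof.
elim: X Y => [|s X IH] [|t Y] XY.
- by [].
- by rewrite [RHS]strip_nil // => r; rewrite -XY nth_nil.
- by rewrite [LHS]strip_nil // => r; rewrite XY nth_nil.
- by rewrite /= (XY 0 : s = t) (IH Y) // => r; exact: XY r.+1.
Qed.

Lemma col_lattice_strip X : col_lattice (strip X) <-> col_lattice X.
Proof.
have same_counts j r : col_count_below (strip X) j r = col_count_below X j r.
  by apply: eq_count => t; rewrite /row nth_strip.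
by split=> lat j j' r jj'; move: (lat j j' r jj'); rewrite !same_counts.
Qed.

Lemma row_Mlq mu r : row (Mlq n mu) r = [set i : 'I_n | i < nth 0 (conj mu) r].
Proof.
rewrite /row /Mlq; case: (ltnP r (size (conj mu))) => r_lt; first by rewrite (nth_map 0).
by rewrite /conj size_map in r_lt; rewrite !nth_default ?size_map.
Qed.

Lemma col_lattice_Mlq mu : col_lattice (Mlq n mu).
Proof.
by move=> j j' r jj'; apply: sub_count => t /=; rewrite !row_Mlq !inE jj'; apply: ltnW.
Qed.

Lemma col_count_below_split X j r L : r <= L ->
  col_count_below X j L = col_count_below X j r + count (fun t => j \in row X t) (iota r (L - r)).
Proof. by move=> rL; rewrite /col_count_below -{1}(subnKC rL) iotaD count_cat. Qed.

Lemma mem_row_nested X j r : nested X 0 (size X) -> (j \in row X r) = (r < col_count X j).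
Proof.
move=> nest; rewrite col_count_col_count_below.
case: (ltnP r (size X)) => [rX|Xr]; last first.
  by rewrite /row nth_default // inE ltnNge (leq_trans (col_count_below_le _ _ _) Xr).
apply/idP/idP => [jr|].
  rewrite (col_count_below_split X j rX) (@col_count_below_full _ _ _ r.+1) ?leq_addr // => t tr.
  by apply: (subsetP (nested_sub nest _ rX)) jr; lia.
apply: contraTT => jNr; rewrite -leqNgt (col_count_below_split X j (ltnW rX)).
rewrite (@eq_in_count _ _ pred0) ?count_pred0 ?addn0 ?col_count_below_le // => t.
rewrite mem_iota => /andP [rt tX]; apply/negP => jt; case/negP: jNr.
by apply: (subsetP (nested_sub nest _ _)) jt; lia.
Qed.

Lemma nested_strip_Mlq X mu : sorted geq mu -> nested X 0 (size X) ->
  (forall j : 'I_n, col_count X j = nth 0 mu j) -> strip X = strip (Mlq n mu).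
Proof.
move=> mu_sorted nest counts; apply: eq_strip => r; apply/setP => j.
rewrite -/(row X r) -/(row _ r) mem_row_nested // counts row_Mlq inE nth_conj.
case: ifP => r_lt; first by rewrite ltn_count_gt.
rewrite ltn0; apply/negbTE; rewrite -leqNgt.
by rewrite (leq_trans (nth_le_head _ mu_sorted)) // leqNgt r_lt.
Qed.

End Strip.

Theorem lemma4p23 (la mu : seq nat) (n : nat) (M : seq {set 'I_n}) :
  is_part la -> is_part mu -> 0 < n ->
  has_shape mu M ->
  size (conj la) <= n ->
  (forall j : 'I_n, col_count M j = nth 0 (conj la) j) ->
  (strip (rhoN M) = strip (Mlq n (conj la)) <-> lattice (rw M)).
Proof.
move=> _ _ _ _ _ counts; rewrite lattice_rwE; split=> [rho_eq | lat].
  apply/col_lattice_rhoN/col_lattice_strip; rewrite rho_eq.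
  exact/col_lattice_strip/col_lattice_Mlq.
apply: nested_strip_Mlq (conj_sorted la) (nested_rhoN lat) _ => j.
by rewrite col_count_rhoN counts.
Qed.
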